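(* Let $(K_n,\Sigma)$ be a signed complete graph with $n\geq4$, and let $X(\Sigma)$ be the set of edges $vw$ of $K_n$ such that the triangle $uvw$ is even for every $u\in V(K_n)\setminus\{v,w\}$. Then every connected component of the graph on $V(K_n)$ with edge set $X(\Sigma)$ is a complete graph.
   Context: A signed graph is a pair $(G,\Sigma)$ with $G$ a finite simple graph and $\Sigma\subseteq E(G)$ (the odd edges). A triangle $uvw$ is odd (resp. even) if $|\Sigma\cap\{uv,uw,vw\}|$ is odd (resp. even). *)

From mathcomp Require Import all_boot.
Set Implicit Arguments. Unset Strict Implicit. Unset Printing Implicit Defensive.

(* Signed complete graph on vertex type T: the edges of K_n are the 2-subsets
   of T; Sigma : {set {set T}} is the set of odd edges. *)
Definition is_signature (T : finType) (Sigma : {set {set T}}) : Prop :=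
  forall e, e \in Sigma -> #|e| = 2.

Definition odd_edge (T : finType) (Sigma : {set {set T}}) (u v : T) : bool :=
  [set u; v] \in Sigma.

Definition even_triangle (T : finType) (Sigma : {set {set T}}) (u v w : T) : bool :=
  ~~ (odd_edge Sigma u v (+) odd_edge Sigma u w (+) odd_edge Sigma v w).

Definition Xrel (T : finType) (Sigma : {set {set T}}) : rel T :=
  fun v w => (v != w) &&
    [forall u, ((u != v) && (u != w)) ==> even_triangle Sigma u v w].

From mathcomp Require Import all_boot.

(* Modulo 2, the parity of the triangle uvx is the sum of the parities of the
   triangles uvw, uwx and vwx, since every edge at w is counted twice.  Hence
   if vw and wx lie in X(Sigma) and v <> x, every triangle uvx with u <> w is
   even, and so is wvx = xvw; thus X(Sigma) is transitive on pairs of distinct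
   vertices, and the ends of any X(Sigma)-path are equal or X(Sigma)-adjacent. *)

Section SignedCompleteGraph.

Variables (T : finType) (Sigma : {set {set T}}).

Lemma odd_edgeC u v : odd_edge Sigma u v = odd_edge Sigma v u.
Proof. by rewrite /odd_edge setUC. Qed.

Lemma even_triangle_sum u v w x :
  even_triangle Sigma u v w -> even_triangle Sigma u w x ->
  even_triangle Sigma v w x -> even_triangle Sigma u v x.
Proof.
rewrite /even_triangle.
by case: (odd_edge _ u v); case: (odd_edge _ u w); case: (odd_edge _ v w);
   case: (odd_edge _ u x); case: (odd_edge _ w x); case: (odd_edge _ v x).
Qed.

Lemma even_triangleC u v w :
  even_triangle Sigma u v w = even_triangle Sigma v u w.
Proof.
rewrite /even_triangle (odd_edgeC u v).
by case: (odd_edge _ v u); case: (odd_edge _ u w); case: (odd_edge _ v w).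
Qed.

Lemma even_triangle_rotl u v w :
  even_triangle Sigma u v w = even_triangle Sigma v w u.
Proof.
rewrite /even_triangle (odd_edgeC u v) (odd_edgeC u w).
by case: (odd_edge _ v u); case: (odd_edge _ w u); case: (odd_edge _ v w).
Qed.

Lemma XrelP v w :
  reflect (v != w /\ forall u, u != v -> u != w -> even_triangle Sigma u v w)
          (Xrel Sigma v w).
Proof.
apply: (iffP andP) => [[vw /forallP even_uvw]|[vw even_uvw]]; split=> //.
  by move=> u uv uw; have := even_uvw u; rewrite uv uw.
by apply/forallP => u; apply/implyP => /andP[uv uw]; apply: even_uvw.
Qed.

Lemma Xrel_trans v w x :
  v != x -> Xrel Sigma v w -> Xrel Sigma w x -> Xrel Sigma v x.
Proof.
move=> vx /XrelP[vw even_vw] /XrelP[wx even_wx]; apply/XrelP; split=> // u uv ux.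
have even_xvw : even_triangle Sigma x v w by apply: even_vw; rewrite eq_sym.
have [->|uw] := eqVneq u w.
  by rewrite -even_triangleC -even_triangle_rotl.
apply: (even_triangle_sum _ _ _ _ (even_vw u uv uw) (even_wx u uw ux)).
by rewrite -even_triangle_rotl.
Qed.

End SignedCompleteGraph.

Lemma connect_eq_or_rel {T : finType} {e : rel T} :
  (forall v w x, v != x -> e v w -> e w x -> e v x) ->
  forall v w, connect e v w -> (v == w) || e v w.
Proof.
move=> e_trans v w /connectP[p]; elim: p v => [|y p IHp] v /=.
  by move=> _ ->; rewrite eqxx.
move=> /andP[e_vy path_y] w_last.
case/orP: (IHp y path_y w_last) => [/eqP <-|e_yw]; first by rewrite e_vy orbT.
have [//|vw /=] := eqVneq v w.
exact: e_trans vw e_vy e_yw.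
Qed.

Theorem lemma3p3 (T : finType) (Sigma : {set {set T}}) :
  4 <= #|T| -> is_signature Sigma ->
  forall v w : T, v != w -> connect (Xrel Sigma) v w -> Xrel Sigma v w.
Proof.
move=> _ _ v w vw /(connect_eq_or_rel (Xrel_trans _ Sigma)).
by rewrite (negbTE vw).
Qed.
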